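(* Let $n$ be a positive integer, $c\ge2$ an integer, and $b_0\ge b_1\ge\dots\ge b_n\ge0$ as defined in the context. Let $$L'=b_0+\sum_{i=0}^{n-1} b_{\min\{i+c+1,n\}}2^i,\qquad U'=b_0+\sum_{i=0}^{n-1} b_{\max\{i+1-c,0\}}2^i.$$ Then $U'\le 2^{2c}L'$.
   Context: Given $w:\{0,1\}^n\to\mathbb{R}_{\ge0}$, fix an ordering $\sigma_1,\dots,\sigma_{2^n}$ of $\{0,1\}^n$ with $w(\sigma_j)\ge w(\sigma_{j+1})$ for $1\le j<2^n$, and set $b_i=w(\sigma_{2^i})$ for $i=0,\dots,n$. *)

From mathcomp Require Import all_boot all_order all_algebra.
Set Implicit Arguments. Unset Strict Implicit. Unset Printing Implicit Defensive.
Import Order.TTheory GRing.Theory Num.Theory.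
Local Open Scope ring_scope.

(* An ordering sigma_1,...,sigma_{2^n} of {0,1}^n is a bijection
   sigma : 'I_(2^n) -> n.-tuple bool, with sigma_j (1-indexed) = sigma (j-1). *)

Definition is_ordering (n : nat) (sigma : 'I_(2^n) -> n.-tuple bool) : Prop :=
  bijective sigma.

Definition nonincreasing_along (R : realFieldType) (n : nat)
  (w : n.-tuple bool -> R) (sigma : 'I_(2^n) -> n.-tuple bool) : Prop :=
  forall j k : 'I_(2^n), nat_of_ord k = (nat_of_ord j).+1 -> w (sigma k) <= w (sigma j).

(* b_i = w(sigma_{2^i}) = w(sigma (2^i - 1)) (0-indexed); only meaningful
   for i <= n, where 2^i - 1 < 2^n; we return 0 otherwise (never used). *)
Definition bval (R : realFieldType) (n : nat)
  (w : n.-tuple bool -> R) (sigma : 'I_(2^n) -> n.-tuple bool) (i : nat) : R :=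
  match @insub nat (fun k => (k < 2^n)%N) 'I_(2^n) (2^i - 1)%N with
  | Some j => w (sigma j)
  | None => 0
  end.

From mathcomp Require Import all_boot all_order all_algebra.
From mathcomp Require Import zify.
Set Implicit Arguments. Unset Strict Implicit. Unset Printing Implicit Defensive.
Import Order.TTheory GRing.Theory Num.Theory.
Local Open Scope ring_scope.

(* Split the sum defining [U'] at
   [m = min(2c, n)].  The first [m] terms are at most [b_0 2^i], and together
   with [b_0] they give at most [2^(2c) b_0].  A term with [i = j + 2c < n] is
   [b_(j+c+1) 2^j 2^(2c)], i.e. [2^(2c)] times the [j]-th term of [L'], since
   then [j + c + 1 <= n]. *)

Lemma sum_expr2 (R : numDomainType) (k : nat) :
  \sum_(0 <= i < k) 2 ^+ i = 2 ^+ k - 1 :> R.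
Proof. by rewrite big_mkord subrX1 -addrA subrr addr0 mul1r. Qed.

Section DoublingBound.
Variables (R : realFieldType) (b : nat -> R) (n c : nat).
Hypothesis b_ge0 : forall i, 0 <= b i.
Hypothesis b_le_b0 : forall i, (i <= n)%N -> b i <= b 0%N.

Let m := minn (2 * c) n.

Lemma head_sum_le :
  \sum_(0 <= i < m) b (maxn (i + 1 - c) 0) * 2 ^+ i <= b 0%N * (2 ^+ (2 * c) - 1).
Proof.
have le_b0 i : (i < m)%N -> b (maxn (i + 1 - c) 0) * 2 ^+ i <= b 0%N * 2 ^+ i.
  by rewrite /m => lt_im; rewrite ler_wpM2r ?exprn_ge0 // b_le_b0 //; lia.
rewrite -sum_expr2 mulr_sumr [X in _ <= X](big_cat_nat _ (geq_minl _ n)) //=.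
rewrite -[X in X <= _]addr0; apply: lerD; first by apply: ler_sum_nat => i /andP [_ /le_b0].
by apply: sumr_ge0 => i _; rewrite mulr_ge0 ?exprn_ge0.
Qed.

Lemma tail_sum_eq :
  \sum_(m <= i < n) b (maxn (i + 1 - c) 0) * 2 ^+ i =
  2 ^+ (2 * c) * \sum_(0 <= j < n - m) b (minn (j + c + 1) n) * 2 ^+ j.
Proof.
have [le_n2c|lt_2cn] := leqP n (2 * c).
  have -> : m = n by rewrite /m; lia.
  by rewrite subnn !big_geq // mulr0.
have -> : m = (2 * c)%N by rewrite /m; lia.
rewrite -{1}[(2 * c)%N]add0n big_addn mulr_sumr.
apply: eq_big_nat => j /andP [_ lt_j].
have -> : (j + 2 * c + 1 - c)%N = minn (j + c + 1) n by lia.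
by rewrite maxn0 exprD mulrA mulrC.
Qed.

Lemma doubling_bound :
  b 0%N + \sum_(0 <= i < n) b (maxn (i + 1 - c) 0) * 2 ^+ i <=
  2 ^+ (2 * c) * (b 0%N + \sum_(0 <= i < n) b (minn (i + c + 1) n) * 2 ^+ i).
Proof.
rewrite (big_cat_nat (leq0n m) (geq_minr _ n)) tail_sum_eq /=.
rewrite [X in _ <= _ * (_ + X)](big_cat_nat (leq0n (n - m)) (leq_subr m n)) /=.
set T := \sum_(n - m <= i < n) _.
have T_ge0 : 0 <= 2 ^+ (2 * c) * T.
  by rewrite mulr_ge0 ?exprn_ge0 ?sumr_ge0 // => i _; rewrite mulr_ge0 ?exprn_ge0.
rewrite !mulrDr addrA [X in _ <= _ + X]addrC addrA lerD2r.
apply: (@le_trans _ _ (2 ^+ (2 * c) * b 0%N)); last by rewrite lerDl.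
by rewrite -lerBrDl mulrC -{2}[b 0%N]mulr1 -mulrBr head_sum_le.
Qed.

End DoublingBound.

Section SortedWeights.
Variables (R : realFieldType) (n : nat) (w : n.-tuple bool -> R)
  (sigma : 'I_(2^n) -> n.-tuple bool).
Hypothesis w_ge0 : forall x, 0 <= w x.
Hypothesis w_sorted : nonincreasing_along w sigma.

Lemma bval_ge0 i : 0 <= bval w sigma i.
Proof. by rewrite /bval; case: insub. Qed.

Lemma w_sigma_nonincreasing (j k : 'I_(2^n)) :
  (j <= k)%N -> w (sigma k) <= w (sigma j).
Proof.
case: k => k; elim: k => [|k IH] lt_k /= le_jk.
  by rewrite (_ : Ordinal lt_k = j) //; apply: val_inj; apply/esym/eqP; rewrite -leqn0.
have [eq_jk|ne_jk] := eqVneq (j : nat) k.+1.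
  by rewrite (_ : Ordinal lt_k = j) //; apply: val_inj.
apply: le_trans (IH (ltnW lt_k) _); last by rewrite /=; lia.
exact: w_sorted.
Qed.

Lemma bvalE i (lt_i : (2 ^ i - 1 < 2 ^ n)%N) :
  bval w sigma i = w (sigma (Ordinal lt_i)).
Proof. by rewrite /bval insubT; congr (w (sigma _)); apply: val_inj. Qed.

Lemma bval_nonincreasing i j :
  (i <= j)%N -> (j <= n)%N -> bval w sigma j <= bval w sigma i.
Proof.
move=> le_ij le_jn.
have le_2i_2j : (2 ^ i <= 2 ^ j)%N by rewrite leq_pexp2l.
have le_2j_2n : (2 ^ j <= 2 ^ n)%N by rewrite leq_pexp2l.
have pos_2i : (0 < 2 ^ i)%N by rewrite expn_gt0.
have lt_i : (2 ^ i - 1 < 2 ^ n)%N by lia.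
have lt_j : (2 ^ j - 1 < 2 ^ n)%N by lia.
rewrite (bvalE lt_i) (bvalE lt_j); apply: w_sigma_nonincreasing => /=; lia.
Qed.

End SortedWeights.

Theorem lemma2 (R : realFieldType) (n c : nat)
  (w : n.-tuple bool -> R) (sigma : 'I_(2^n) -> n.-tuple bool) :
  (0 < n)%N -> (2 <= c)%N ->
  (forall x, 0 <= w x) ->
  is_ordering sigma ->
  nonincreasing_along w sigma ->
  let b := bval w sigma in
  let L' := b 0%N + \sum_(i < n) b (minn (i + c + 1) n) * 2 ^+ i in
  let U' := b 0%N + \sum_(i < n) b (maxn (i + 1 - c) 0) * 2 ^+ i in
  U' <= 2 ^+ (2 * c) * L'.
Proof.
move=> _ _ w_ge0 _ w_sorted /=.
have b_le_b0 i : (i <= n)%N -> bval w sigma i <= bval w sigma 0%N.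
  exact: bval_nonincreasing.
by have := doubling_bound c (bval_ge0 sigma w_ge0) b_le_b0; rewrite !big_mkord.
Qed.
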